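(* Let $M$ be a representation of $A$ and $L$ a vertex subrepresentation of $M$. Then $$\mathsf{F}_L(M)=\mathsf{F}_0(M/L)\cap\mathsf{F}_L(L).$$
   Context: $A=kQ/I$ finite-dimensional basic over algebraically closed $k$ of characteristic 0. $\mathsf{N}(M)$ is the convex hull in $\mathbb{R}^{Q_0}$ of dimension vectors of subrepresentations of $M$. For each vertex $\gamma$ of $\mathsf{N}(M)$ there is a unique subrepresentation of $M$ of dimension $\gamma$, called a vertex subrepresentation. For a vertex subrepresentation $L$ of $M$, $\mathsf{F}_L(M)$ denotes the dual (normal) cone of the vertex $\underline{\dim}L$: the cone of $\delta\in\mathbb{R}^{Q_0}$ with $\delta(\underline{\dim}L)=\max_{x\in\mathsf{N}(M)}\delta(x)$, where $\delta(\gamma)=\sum_v\delta(v)\gamma(v)$. Thus $\mathsf{F}_0(N)$ and $\mathsf{F}_N(N)$ are the dual cones of the vertices $0$ and $\underline{\dim}N$ of $\mathsf{N}(N)$. *)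

From HB Require Import structures.
From mathcomp Require Import all_boot all_order all_algebra.
Set Implicit Arguments. Unset Strict Implicit. Unset Printing Implicit Defensive.
Import Order.TTheory GRing.Theory Num.Theory.
Local Open Scope ring_scope.

Section Quiver.
Variables (k : fieldType) (Q0 Q1 : finType) (s t : Q1 -> Q0).

Fixpoint valid_path (u v : Q0) (arr : seq Q1) : bool :=
  match arr with
  | [::] => u == v
  | a :: rest => (s a == u) && valid_path (t a) v rest
  end.

(* a path: (start, end, arrows) *)
Definition path : Type := (Q0 * Q0 * seq Q1)%type.
Definition path_ok (p : path) : bool := valid_path p.1.1 p.1.2 p.2.

(* elements of kQ as formal k-linear combinations of paths *)
Definition kQ : Type := seq (k * path).
Definition coefQ (x : kQ) (p : path) : k := \sum_(c <- x | c.2 == p) c.1.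
Definition eqQ (x y : kQ) : Prop := forall p, path_ok p -> coefQ x p = coefQ y p.

Definition pcat (p q : path) : option path :=
  if p.1.2 == q.1.1 then Some (p.1.1, q.1.2, p.2 ++ q.2) else None.
Definition mulQ (x y : kQ) : kQ :=
  flatten [seq pmap (fun b => omap (fun pq => (a.1 * b.1, pq)) (pcat a.2 b.2)) y
          | a <- x].

(* a relation: a k-linear combination of paths from r_src to r_tgt *)
Record relation := Relation {
  r_src : Q0; r_tgt : Q0; r_terms : seq (k * seq Q1) }.
Definition rel_elt (r : relation) : kQ :=
  [seq (c.1, (r_src r, r_tgt r, c.2)) | c <- r_terms r].

(* x lies in the two-sided ideal of kQ generated by rels *)
Definition in_ideal (rels : seq relation) (x : kQ) : Prop :=
  exists g : seq (k * path * 'I_(size rels) * path),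
    eqQ x (flatten [seq mulQ (mulQ [:: (e.1.1.1, e.1.1.2)]
                                   (rel_elt (tnth (in_tuple rels) e.1.2)))
                             [:: (1, e.2)] | e <- g]).

(* I = <rels> is admissible: R_Q^m <= I <= R_Q^2 for some m >= 2 *)
Definition admissible (rels : seq relation) : Prop :=
  all (fun r => all (fun c => valid_path (r_src r) (r_tgt r) c.2 && (1 < size c.2)%N)
                    (r_terms r)) rels /\
  exists m : nat, (2 <= m)%N /\
    forall p : path, path_ok p -> size p.2 = m -> in_ideal rels [:: (1, p)].

(* Finite dimensional representations (row-vector convention:          *)
(* x in M_(s a) is sent to x *m rmap a in M_(t a)).                    *)
Record rep := Rep {
  rdim : Q0 -> nat;
  rmap : forall a : Q1, 'M[k]_(rdim (s a), rdim (t a)) }.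

Fixpoint path_mx (M : rep) (u v : Q0) (arr : seq Q1) : 'M[k]_(rdim M u, rdim M v) :=
  match arr with
  | [::] => if u == v then conform_mx 0 (1%:M : 'M[k]_(rdim M u)) else 0
  | a :: rest =>
      if s a == u then
        conform_mx (0 : 'M[k]_(rdim M u, rdim M (t a))) (rmap M a)
          *m path_mx M (t a) v rest
      else 0
  end.

(* M is a representation of A = kQ/<rels> *)
Definition rep_of (rels : seq relation) (M : rep) : Prop :=
  forall i : 'I_(size rels), let r := tnth (in_tuple rels) i in
    \sum_(c <- r_terms r) c.1 *: path_mx M (r_src r) (r_tgt r) c.2 = 0.

(* subrepresentations: a subspace (row space) at each vertex, stable by arrows *)
Record subrep (M : rep) := Subrep {
  sub_sp : forall v, 'M[k]_(rdim M v);
  sub_stable : forall a, (sub_sp (s a) *m rmap M a <= sub_sp (t a))%MS }.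

Definition subrep_rep (M : rep) (L : subrep M) : rep :=
  @Rep (fun v => \rank (sub_sp L v))
       (fun a => row_base (sub_sp L (s a)) *m rmap M a
                   *m pinvmx (row_base (sub_sp L (t a)))).

(* the quotient representation M/L (realised on complements of L) *)
Definition quot_rep (M : rep) (L : subrep M) : rep :=
  @Rep (fun v => \rank (sub_sp L v)^C)%MS
       (fun a => row_base (sub_sp L (s a))^C%MS *m rmap M a
                   *m proj_mx (sub_sp L (t a))^C%MS (sub_sp L (t a))
                   *m pinvmx (row_base (sub_sp L (t a))^C%MS)).

Variable R : realFieldType.

Definition subdimv (M : rep) (L : subrep M) : Q0 -> R :=
  fun v => (\rank (sub_sp L v))%:R.
Definition repdimv (M : rep) : Q0 -> R := fun v => (rdim M v)%:R.

Definition pairing (delta gamma : Q0 -> R) : R := \sum_v delta v * gamma v.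

Definition conv (P : (Q0 -> R) -> Prop) (x : Q0 -> R) : Prop :=
  exists (n : nat) (lam : 'I_n -> R) (p : 'I_n -> Q0 -> R),
    [/\ forall i, 0 <= lam i, \sum_i lam i = 1, forall i, P (p i)
      & forall v, x v = \sum_i lam i * p i v].

Definition newton (M : rep) : (Q0 -> R) -> Prop :=
  conv (fun g => exists L : subrep M, forall v, g v = subdimv L v).

Definition is_vertex (P : (Q0 -> R) -> Prop) (x : Q0 -> R) : Prop :=
  P x /\ forall (y z : Q0 -> R) (c : R), P y -> P z -> 0 < c -> c < 1 ->
    (forall v, x v = c * y v + (1 - c) * z v) -> forall v, y v = z v.

Definition Fcone (M : rep) (gamma : Q0 -> R) (delta : Q0 -> R) : Prop :=
  newton M gamma /\ forall x, newton M x -> pairing delta x <= pairing delta gamma.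

End Quiver.

From HB Require Import structures.
From mathcomp Require Import all_boot all_order all_algebra.
Import Order.TTheory GRing.Theory Num.Theory.
Local Open Scope ring_scope.

Set Implicit Arguments. Unset Strict Implicit.

(* Since N(M) is the convex hull of the dimension vectors of subrepresentations, a
   linear form delta is maximal at dim L iff delta(dim N) <= delta(dim L) for every
   subrepresentation N of M, and similarly for M/L and L.  Subrepresentations of M/L
   correspond to subrepresentations of M containing L (dimension shifted by dim L),
   those of L are subrepresentations of M, and every N of M satisfies
   dim N = dim (image of N in M/L) + dim (N ∩ L).  The three conditions then match. *)

Section ComplementProjection.
Variable k : fieldType.

Lemma capmx_complL n (U : 'M[k]_n) : (U^C :&: U = 0)%MS.
Proof. by rewrite capmxC capmx_compl. Qed.

Lemma add_proj_compl m n (U : 'M[k]_n) (W : 'M[k]_(m, n)) :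
  W *m proj_mx U^C%MS U + W *m proj_mx U U^C%MS = W.
Proof.
apply: add_proj_mx; first exact: capmx_complL.
by apply: submx_full; rewrite addsmxC addsmx_compl_full.
Qed.

Lemma kermx_proj_compl n (U : 'M[k]_n) : (kermx (proj_mx U^C%MS U) :=: U)%MS.
Proof.
apply/eqmxP/andP; split; last by rewrite sub_kermx proj_mx_0 ?capmx_complL.
set K := kermx _.
have K0 : K *m proj_mx U^C%MS U = 0 by apply/eqP; rewrite -sub_kermx.
by rewrite -(add_proj_compl U K) K0 add0r proj_mx_sub.
Qed.

Lemma mxrank_proj_compl_cap m n (U : 'M[k]_n) (W : 'M[k]_(m, n)) :
  \rank W = (\rank (W *m proj_mx U^C%MS U) + \rank (W :&: U))%N.
Proof.
by rewrite -(mxrank_mul_ker W (proj_mx U^C%MS U)) (cap_eqmx (eqmx_refl W) (kermx_proj_compl U)).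
Qed.

End ComplementProjection.

Section SubAndQuotient.
Variables (k : fieldType) (Q0 Q1 : finType) (s t : Q1 -> Q0).
Variables (M : rep k s t) (L : subrep M).

Local Notation Lv v := (sub_sp L v).
Local Notation Bv v := (row_base (sub_sp L v)).
Local Notation Cv v := (row_base (sub_sp L v)^C%MS).
Local Notation Pv v := (proj_mx (sub_sp L v)^C%MS (sub_sp L v)).

Lemma subrep_rmapE a : rmap (subrep_rep L) a *m Bv (t a) = Bv (s a) *m rmap M a.
Proof.
apply: mulmxKpV; rewrite eq_row_base (eqmxMr _ (eq_row_base _)).
exact: sub_stable L a.
Qed.

Lemma quot_rmapE a :
  rmap (quot_rep L) a *m Cv (t a) = Cv (s a) *m rmap M a *m Pv (t a).
Proof. by apply: mulmxKpV; rewrite eq_row_base proj_mx_sub. Qed.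

Lemma incl_subrep_stable (N : subrep (subrep_rep L)) a :
  (<<sub_sp N (s a) *m Bv (s a)>> *m rmap M a <= <<sub_sp N (t a) *m Bv (t a)>>)%MS.
Proof.
rewrite (eqmxMr _ (genmxE _)) genmxE -mulmxA -subrep_rmapE mulmxA.
by rewrite submxMfree ?row_base_free //; exact: sub_stable N a.
Qed.

Definition incl_subrep (N : subrep (subrep_rep L)) : subrep M :=
  @Subrep _ _ _ _ _ M (fun v => <<sub_sp N v *m Bv v>>%MS) (incl_subrep_stable N).

Lemma mxrank_incl_subrep N v :
  \rank (sub_sp (incl_subrep N) v) = \rank (sub_sp N v).
Proof. by rewrite /= genmxE mxrankMfree ?row_base_free. Qed.

Lemma preim_subrep_stable (N : subrep (quot_rep L)) a :
  ((sub_sp N (s a) *m Cv (s a) + Lv (s a))%MS *m rmap M a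
     <= sub_sp N (t a) *m Cv (t a) + Lv (t a))%MS.
Proof.
rewrite addsmxMr addsmx_sub (submx_trans (sub_stable L a) (addsmxSr _ _)) andbT.
set x := _ *m rmap M a.
rewrite -(add_proj_compl (Lv (t a)) x) addmx_sub_adds ?proj_mx_sub //.
have -> : x *m Pv (t a) = sub_sp N (s a) *m rmap (quot_rep L) a *m Cv (t a).
  by rewrite -mulmxA quot_rmapE /x !mulmxA.
by rewrite submxMr //; exact: sub_stable N a.
Qed.

Definition preim_subrep (N : subrep (quot_rep L)) : subrep M :=
  @Subrep _ _ _ _ _ M (fun v => (sub_sp N v *m Cv v + Lv v)%MS) (preim_subrep_stable N).

Lemma mxrank_preim_subrep N v :
  \rank (sub_sp (preim_subrep N) v) = (\rank (sub_sp N v) + \rank (Lv v))%N.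
Proof.
rewrite /= mxrank_disjoint_sum ?mxrankMfree ?row_base_free //.
apply/eqP; rewrite -submx0 -(capmx_complL (Lv v)) capmxS //.
by rewrite (submx_trans (submxMl _ _)) ?eq_row_base.
Qed.

Lemma cap_subrep_stable (N : subrep M) a :
  (<<(sub_sp N (s a) :&: Lv (s a)) *m pinvmx (Bv (s a))>> *m rmap (subrep_rep L) a
     <= <<(sub_sp N (t a) :&: Lv (t a)) *m pinvmx (Bv (t a))>>)%MS.
Proof.
rewrite (eqmxMr _ (genmxE _)) genmxE -(submxMfree _ _ (row_base_free (Lv (t a)))).
set Y := _ *m pinvmx (Bv (s a)).
rewrite -[Y *m _ *m _]mulmxA subrep_rmapE mulmxA /Y !mulmxKpV ?eq_row_base ?capmxSr //.
rewrite sub_capmx (submx_trans (submxMr _ (capmxSl _ _)) (sub_stable N a)).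
exact: submx_trans (submxMr _ (capmxSr _ _)) (sub_stable L a).
Qed.

Definition cap_subrep (N : subrep M) : subrep (subrep_rep L) :=
  @Subrep _ _ _ _ _ (subrep_rep L)
    (fun v => <<(sub_sp N v :&: Lv v) *m pinvmx (Bv v)>>%MS) (cap_subrep_stable N).

Lemma mxrank_cap_subrep N v :
  \rank (sub_sp (cap_subrep N) v) = \rank (sub_sp N v :&: Lv v).
Proof.
rewrite /= genmxE -(mxrankMfree _ (row_base_free (Lv v))).
by rewrite mulmxKpV ?eq_row_base ?capmxSr.
Qed.

Lemma image_subrep_stable (N : subrep M) a :
  (<<sub_sp N (s a) *m Pv (s a) *m pinvmx (Cv (s a))>> *m rmap (quot_rep L) a
     <= <<sub_sp N (t a) *m Pv (t a) *m pinvmx (Cv (t a))>>)%MS.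
Proof.
rewrite (eqmxMr _ (genmxE _)) genmxE.
rewrite -(submxMfree _ _ (row_base_free (Lv (t a))^C%MS)).
set Y := _ *m pinvmx (Cv (s a)).
rewrite -[Y *m _ *m _]mulmxA quot_rmapE 2!mulmxA /Y.
rewrite !mulmxKpV ?eq_row_base ?proj_mx_sub //.
set W := sub_sp N (s a).
(* The component of W along L is mapped into L, which Pv (t a) kills. *)
have -> : W *m Pv (s a) = W - W *m proj_mx (Lv (s a)) (Lv (s a))^C%MS.
  by rewrite -{2}(add_proj_compl (Lv (s a)) W) addrK.
rewrite !mulmxBl [X in _ - X](proj_mx_0 (capmx_complL _)) ?subr0.
  by apply: submxMr; exact: sub_stable N a.
exact: submx_trans (submxMr _ (proj_mx_sub _ _ _)) (sub_stable L a).
Qed.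

Definition image_subrep (N : subrep M) : subrep (quot_rep L) :=
  @Subrep _ _ _ _ _ (quot_rep L)
    (fun v => <<sub_sp N v *m Pv v *m pinvmx (Cv v)>>%MS) (image_subrep_stable N).

Lemma mxrank_image_subrep N v :
  \rank (sub_sp (image_subrep N) v) = \rank (sub_sp N v *m Pv v).
Proof.
rewrite /= genmxE -(mxrankMfree _ (row_base_free (Lv v)^C%MS)).
by rewrite mulmxKpV ?eq_row_base ?proj_mx_sub.
Qed.

Lemma mxrank_image_cap_subrep N v :
  \rank (sub_sp N v) =
  (\rank (sub_sp (image_subrep N) v) + \rank (sub_sp (cap_subrep N) v))%N.
Proof. by rewrite mxrank_image_subrep mxrank_cap_subrep -mxrank_proj_compl_cap. Qed.

End SubAndQuotient.

Section Pairing.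
Variables (Q0 : finType) (R : realFieldType).
Implicit Types (d : Q0 -> R) (P : (Q0 -> R) -> Prop).

Lemma pairing0 d : pairing d (fun=> 0) = 0.
Proof. by apply: big1 => v _; rewrite mulr0. Qed.

Lemma pairing_natD d (m n1 n2 : Q0 -> nat) :
  (forall v, m v = n1 v + n2 v)%N ->
  pairing d (fun v => (m v)%:R) =
  pairing d (fun v => (n1 v)%:R) + pairing d (fun v => (n2 v)%:R).
Proof.
by move=> mE; rewrite /pairing -big_split; apply: eq_bigr => v _; rewrite mE natrD mulrDr.
Qed.

Lemma conv_pt P g : P g -> conv P g.
Proof.
move=> Pg; exists 1%N, (fun=> 1), (fun=> g).
by split=> [_||_|v]; rewrite ?big_ord1 ?mul1r ?ler01.
Qed.

Lemma conv_pairing_le P d c x :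
  (forall g, P g -> pairing d g <= c) -> conv P x -> pairing d x <= c.
Proof.
move=> Pc [n [lam [p [lam_ge0 lam_sum1 Pp xE]]]].
have -> : pairing d x = \sum_i lam i * pairing d (p i).
  rewrite /pairing; under eq_bigr => v _ do rewrite xE mulr_sumr.
  rewrite exchange_big; apply: eq_bigr => i _; rewrite mulr_sumr.
  by apply: eq_bigr => v _; rewrite mulrCA.
rewrite -[c]mul1r -lam_sum1 mulr_suml; apply: ler_sum => i _.
by rewrite ler_wpM2l ?Pc.
Qed.

End Pairing.

Section NormalCone.
Variables (k : fieldType) (Q0 Q1 : finType) (s t : Q1 -> Q0) (R : realFieldType).

Lemma FconeP (M : rep k s t) (L : subrep M) gamma delta :
  (forall v, gamma v = subdimv R L v) ->
  Fcone M gamma delta <->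
  (forall N : subrep M, pairing delta (subdimv R N) <= pairing delta gamma).
Proof.
move=> gammaE; split=> [[_ max_gamma] N | max_gamma].
  by apply: max_gamma; apply: conv_pt; exists N.
split; first by apply: conv_pt; exists L.
move=> x; apply: conv_pairing_le => g [N gE].
suff -> : pairing delta g = pairing delta (subdimv R N) by exact: max_gamma.
by apply: eq_bigr => v _; rewrite gE.
Qed.

Lemma subrep0_stable (M : rep k s t) a :
  ((0 : 'M[k]_(rdim M (s a))) *m rmap M a <= (0 : 'M[k]_(rdim M (t a))))%MS.
Proof. by rewrite mul0mx sub0mx. Qed.

Definition subrep0 (M : rep k s t) : subrep M :=
  @Subrep _ _ _ _ _ M (fun=> 0) (@subrep0_stable M).

Lemma subrep1_stable (M : rep k s t) a :
  ((1%:M : 'M[k]_(rdim M (s a))) *m rmap M a <= (1%:M : 'M[k]_(rdim M (t a))))%MS.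
Proof. exact: submx1. Qed.

Definition subrep1 (M : rep k s t) : subrep M :=
  @Subrep _ _ _ _ _ M (fun=> 1%:M) (@subrep1_stable M).

Lemma Fcone0P (M : rep k s t) delta :
  Fcone M (fun=> 0) delta <->
  (forall N : subrep M, pairing delta (subdimv R N) <= 0).
Proof.
rewrite -{2}(pairing0 delta); apply: (FconeP (L := subrep0 M)) => v.
by rewrite /subdimv mxrank0.
Qed.

Lemma FconeTP (M : rep k s t) delta :
  Fcone M (repdimv R M) delta <->
  (forall N : subrep M, pairing delta (subdimv R N) <= pairing delta (repdimv R M)).
Proof. by apply: (FconeP (L := subrep1 M)) => v; rewrite /subdimv mxrank1. Qed.

End NormalCone.

Lemma subrep_pairing_max_split (k : fieldType) (Q0 Q1 : finType) (s t : Q1 -> Q0)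
    (R : realFieldType) (M : rep k s t) (L : subrep M) (delta : Q0 -> R) :
  (forall N : subrep M, pairing delta (subdimv R N) <= pairing delta (subdimv R L)) <->
  (forall N : subrep (quot_rep L), pairing delta (subdimv R N) <= 0) /\
  (forall N : subrep (subrep_rep L),
     pairing delta (subdimv R N) <= pairing delta (repdimv R (subrep_rep L))).
Proof.
split=> [max_L | [max_quot max_sub] N].
  split=> N; last first.
    suff <- : pairing delta (subdimv R (incl_subrep N)) = pairing delta (subdimv R N).
      exact: max_L.
    by apply: eq_bigr => v _; rewrite /subdimv mxrank_incl_subrep.
  have := max_L (preim_subrep N).
  rewrite (pairing_natD _ (mxrank_preim_subrep N)) => ?.
  by rewrite -(lerD2r (pairing delta (subdimv R L))) add0r.
rewrite (pairing_natD _ (mxrank_image_cap_subrep L N)) -[X in _ <= X]add0r.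
exact: lerD (max_quot _) (max_sub _).
Qed.

Theorem proposition4p9
  (k : closedFieldType) (Hchar : [pchar k] =i pred0)
  (Q0 Q1 : finType) (s t : Q1 -> Q0)
  (rels : seq (relation k Q0 Q1)) (Hadm : admissible s t rels)
  (R : realFieldType)
  (M : rep k s t) (HM : rep_of rels M)
  (L : subrep M) (HL : is_vertex (newton (R := R) M) (subdimv R L)) :
  forall delta : Q0 -> R,
    Fcone M (subdimv R L) delta <->
    Fcone (quot_rep L) (fun _ => 0) delta /\
    Fcone (subrep_rep L) (repdimv R (subrep_rep L)) delta.
Proof.
move=> delta; split.
  move=> /(FconeP (L := L) delta (fun v => erefl)) /subrep_pairing_max_split [? ?].
  by split; [apply/Fcone0P | apply/FconeTP].
case=> /Fcone0P ? /FconeTP ?.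
by apply/(FconeP (L := L) delta (fun v => erefl))/subrep_pairing_max_split.
Qed.
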